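(* Let $\mathcal{C}$ be the smallest set of functions of finite arity on $[0,1]$ such that: (i) $\mathcal{C}$ contains all projections $p^n_i(x_0,\dots,x_{n-1})=x_i$; (ii) if $g\in\mathcal{C}$ is $n$-ary and $q\in\mathbb{Q}\cap[0,1]$, then $\mathbf{x}\mapsto\chi_q(g(\mathbf{x}))$ belongs to $\mathcal{C}$; (iii) if $g_1,g_2\in\mathcal{C}$ are $n$-ary and $q\in\mathbb{Q}\cap[0,1]$, then $\mathbf{x}\mapsto\mathsf{Med}_q(g_1(\mathbf{x}),g_2(\mathbf{x}))$ belongs to $\mathcal{C}$; (iv) if $I$ is a nonempty set with $|I|\le\mathfrak{c}$ and $g_i\in\mathcal{C}$, $i\in I$, are $n$-ary, then the pointwise supremum $\bigvee_{i\in I}g_i$ and the pointwise infimum $\bigwedge_{i\in I}g_i$ belong to $\mathcal{C}$. Then $\mathcal{C}=\mathsf{Agg}$; that is, $\mathsf{Agg}$ is generated by the countable set consisting of the infinitary operations $\bigvee$ and $\bigwedge$, the functions $\chi_q$ and the medians $\mathsf{Med}_q$, $q\in\mathbb{Q}\cap[0,1]$.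
   Context: An $n$-ary aggregation function on $[0,1]$ is a function $f\colon[0,1]^n\to[0,1]$ nondecreasing in each coordinate with $f(0,\dots,0)=0$ and $f(1,\dots,1)=1$; $\mathsf{Agg}$ is the set of all aggregation functions of all finite arities $n\in\mathbb{N}$ (unary ones not restricted to the identity). For $a\in[0,1]$, $\chi_a(x)=1$ if $x\ge a$ and $x\neq0$, and $\chi_a(x)=0$ otherwise. $\mathsf{Med}_b(x,y)$ is the median of $x,y,b$. $\mathfrak{c}=2^{\aleph_0}$. *)

From HB Require Import structures.
From mathcomp Require Import all_boot all_order all_algebra.
From mathcomp Require Import boolp classical_sets cardinality reals.
Set Implicit Arguments. Unset Strict Implicit. Unset Printing Implicit Defensive.
Import Order.TTheory GRing.Theory Num.Theory.
Local Open Scope ring_scope.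
Local Open Scope classical_set_scope.

(* An n-ary function on [0,1] is represented by F : ('I_n -> R) -> R, of which
   only the values on the cube [0,1]^n are relevant. *)
Definition in01 (R : realType) (x : R) : Prop := 0 <= x <= 1.
Definition in_cube (R : realType) n (x : 'I_n -> R) : Prop := forall i, in01 (x i).

Definition chi (R : realType) (a x : R) : R :=
  if (a <= x) && (x != 0) then 1 else 0.

(* Med_b(x,y) = median of x, y, b *)
Definition Med (R : realType) (b x y : R) : R :=
  Num.max (Num.min x y) (Num.min (Num.max x y) b).

Definition Agg (R : realType) n (f : ('I_n -> R) -> R) : Prop :=
  (forall x, in_cube x -> in01 (f x)) /\
  (forall x y, in_cube x -> in_cube y -> (forall i, x i <= y i) -> f x <= f y) /\
  f (fun _ => 0) = 0 /\ f (fun _ => 1) = 1.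

Definition rat01 (q : rat) : bool := (0 <= q) && (q <= 1).

(* The smallest class C of finite-arity functions on [0,1] closed under
   (i)-(iv); functions agreeing on [0,1]^n are identified (rule C_ext). *)
Inductive C (R : realType) : forall n, (('I_n -> R) -> R) -> Prop :=
| C_proj n (i : 'I_n) : C (fun x => x i)
| C_chi n (g : ('I_n -> R) -> R) (q : rat) :
    rat01 q -> C g -> C (fun x => chi (ratr q) (g x))
| C_med n (g1 g2 : ('I_n -> R) -> R) (q : rat) :
    rat01 q -> C g1 -> C g2 -> C (fun x => Med (ratr q) (g1 x) (g2 x))
| C_sup n (I : Type) (g : I -> ('I_n -> R) -> R) :
    inhabited I -> ([set: I] #<= [set: R])%card -> (forall i, C (g i)) ->
    C (fun x => sup (range (fun i => g i x)))
| C_inf n (I : Type) (g : I -> ('I_n -> R) -> R) :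
    inhabited I -> ([set: I] #<= [set: R])%card -> (forall i, C (g i)) ->
    C (fun x => inf (range (fun i => g i x)))
| C_ext n (g h : ('I_n -> R) -> R) :
    C g -> (forall x, in_cube x -> h x = g x) -> C h.

From mathcomp Require Import all_boot all_order all_algebra.
From mathcomp Require Import boolp classical_sets cardinality reals.
Set Implicit Arguments. Unset Strict Implicit. Unset Printing Implicit Defensive.
Import Order.TTheory GRing.Theory Num.Theory.
Local Open Scope ring_scope.
Local Open Scope classical_set_scope.

(* Soundness: each generating operation preserves monotonicity, the range [0,1]
   and the boundary values, so every member of C is an aggregation function.

   Completeness: for 0 < c <= 1 the step x |-> [c <= x_i] on [0,1] is the infimum
   of the chi_q(x_i) over the rationals 0 <= q < c, and an infimum over coordinates
   gives the indicator of the upset of a point a.  The median Med_q of this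
   indicator and the indicator of the top vertex is q on the upset of a (1 at the
   top, 0 elsewhere), hence lies below f as soon as q <= f(a); f is the supremum
   of all these functions.  Rule (iv) only admits index sets of size at most the
   continuum; rather than bounding the size of R^n x Q by cardinal arithmetic,
   this supremum is taken as an iterated supremum over R and Q. *)

Section RealFacts.
Variable R : realType.

Section Family.
Variables (I : Type) (g : I -> R).

Lemma range_cst (c : R) : inhabited I -> (forall i, g i = c) -> range g = [set c].
Proof.
case=> i0 gc; apply/seteqP; split=> [_ [i _ <-]|_ ->]; first exact: gc.
by exists i0.
Qed.

Lemma le_sup_range (b : R) j : (forall i, g i <= b) -> g j <= sup (range g).
Proof. by move=> gb; apply: ub_le_sup; [exists b => _ [i _ <-]|exists j]. Qed.

Lemma sup_range_le (b : R) : inhabited I -> (forall i, g i <= b) -> sup (range g) <= b.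
Proof. by case=> i0 gb; apply: ge_sup; [exists (g i0), i0|move=> _ [i _ <-]]. Qed.

Lemma inf_range_le (b : R) j : (forall i, b <= g i) -> inf (range g) <= g j.
Proof. by move=> gb; apply: ge_inf; [exists b => _ [i _ <-]|exists j]. Qed.

Lemma le_inf_range (b : R) : inhabited I -> (forall i, b <= g i) -> b <= inf (range g).
Proof. by case=> i0 gb; apply: lb_le_inf; [exists (g i0), i0|move=> _ [i _ <-]]. Qed.

Lemma inf_range_min j : (forall i, g j <= g i) -> inf (range g) = g j.
Proof.
move=> gj; apply/le_anti/andP; split; first exact: inf_range_le gj.
exact: le_inf_range (inhabits j) gj.
Qed.

End Family.

Lemma sup_range_pair (I J : Type) (g : I * J -> R) (b : R) :
  inhabited I -> inhabited J -> (forall p, g p <= b) ->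
  sup (range g) = sup (range (fun i => sup (range (fun j => g (i, j))))).
Proof.
move=> [i0] [j0] gb.
have inner_le i : sup (range (fun j => g (i, j))) <= b.
  by apply: sup_range_le => // j; exact: gb.
apply/le_anti/andP; split.
  apply: sup_range_le => [|[i j]]; first exact: inhabits (i0, j0).
  apply: le_trans (le_sup_range i inner_le).
  exact: le_sup_range j (fun j => gb (i, j)).
apply: sup_range_le => [|i]; first exact: inhabits i0.
apply: sup_range_le => [|j]; first exact: inhabits j0.
exact: le_sup_range (i, j) gb.
Qed.

Lemma le_rat_dense (y s : R) :
  0 <= s -> (forall q : rat, 0 <= q -> ratr q < y -> ratr q <= s) -> y <= s.
Proof.
move=> s0 sq; rewrite leNgt; apply/negP => /rat_in_itvoo[q].
rewrite in_itv /= => /andP[lt_sq lt_qy].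
have q0 : 0 <= q by rewrite -(ler0q R) (le_trans s0) ?ltW.
by have := sq q q0 lt_qy; rewrite leNgt lt_sq.
Qed.

Lemma countable_card_le (T : countType) : ([set: T] #<= [set: R])%card.
Proof.
apply: card_le_trans (countableP [set: T]) _.
have natr_inj : {in [set: nat] &, injective (fun k : nat => k%:R : R)}.
  by move=> i j _ _ /eqP; rewrite eqr_nat => /eqP.
by rewrite -(card_le_eql (inj_card_eq natr_inj)); exact: card_leT.
Qed.

Lemma ler_rat1 (q : rat) : (ratr q <= 1 :> R) = (q <= 1).
Proof. by rewrite -(rmorph1 (ratr : rat -> R)) ler_rat. Qed.

Lemma in01_ratr (q : rat) : rat01 q -> in01 (ratr q : R).
Proof. by case/andP=> q0 q1; rewrite /in01 ler0q q0 ler_rat1. Qed.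

End RealFacts.

Section ChiMed.
Variable R : realType.
Implicit Types a b x y : R.

Lemma chi01 a x : in01 (chi a x).
Proof. by rewrite /in01 /chi; case: ifP; rewrite ?lexx ?ler01. Qed.

Lemma chi0 a : chi a 0 = 0.
Proof. by rewrite /chi eqxx andbF. Qed.

Lemma chi_lt a x : x < a -> chi a x = 0.
Proof. by rewrite /chi ltNge => /negbTE ->. Qed.

Lemma chi_ge a x : a <= x -> 0 < x -> chi a x = 1.
Proof. by rewrite /chi => -> /gt_eqF ->. Qed.

Lemma chi_mono a x y : 0 <= x -> x <= y -> chi a x <= chi a y.
Proof.
rewrite le0r => /predU1P[-> _|x0 xy]; first by rewrite chi0; case/andP: (chi01 a y).
have [ax|xa] := leP a x; last by rewrite chi_lt //; case/andP: (chi01 a y).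
by rewrite !chi_ge ?(le_trans ax xy) ?(lt_le_trans x0 xy).
Qed.

Lemma Med_xx b x : Med b x x = x.
Proof. by rewrite /Med minxx maxxx max_l // ge_min lexx. Qed.

Lemma Med_mid b x y : y <= b <= x -> Med b x y = b.
Proof.
case/andP=> yb bx; have yx := le_trans yb bx.
by rewrite /Med (min_r yx) (max_l yx) (min_r bx) (max_r yb).
Qed.

Lemma le_Med b x y : b <= x -> b <= Med b x y.
Proof.
by move=> bx; rewrite /Med le_max; apply/orP; right; rewrite le_min lexx le_max bx.
Qed.

Lemma Med_mono b x y x' y' : x <= x' -> y <= y' -> Med b x y <= Med b x' y'.
Proof. by move=> xx' yy'; rewrite /Med le_max2 ?le_min2 ?le_max2. Qed.

Lemma Med01 b x y : in01 b -> in01 x -> in01 y -> in01 (Med b x y).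
Proof.
rewrite /in01 /Med => /andP[b0 b1] /andP[x0 x1] /andP[y0 y1].
by rewrite le_max le_min x0 y0 ge_max !ge_min x1 b1 !orbT.
Qed.

End ChiMed.

Section Soundness.
Variables (R : realType) (n : nat).
Implicit Types (f g h : ('I_n -> R) -> R).

Lemma AggI f :
  (forall x, in_cube x -> in01 (f x)) ->
  (forall x y, in_cube x -> in_cube y -> (forall i, x i <= y i) -> f x <= f y) ->
  f (fun _ => 0) = 0 -> f (fun _ => 1) = 1 -> Agg f.
Proof. by []. Qed.

Lemma Agg_proj (i : 'I_n) : Agg (fun x : 'I_n -> R => x i).
Proof. by apply: AggI => [x /(_ i)|x y _ _ /(_ i)||]. Qed.

Lemma Agg_chi g (a : R) : a <= 1 -> Agg g -> Agg (fun x => chi a (g x)).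
Proof.
move=> a1 [g01 [gm [g0 g1]]]; apply: AggI => [x _|x y cx cy xy||]; first exact: chi01.
- by apply: chi_mono (gm _ _ cx cy xy); case/andP: (g01 x cx).
- by rewrite g0 chi0.
- by rewrite g1 chi_ge ?ltr01.
Qed.

Lemma Agg_Med g1 g2 (b : R) : in01 b -> Agg g1 -> Agg g2 ->
  Agg (fun x => Med b (g1 x) (g2 x)).
Proof.
move=> b01 [g01 [gm [g0 g1E]]] [h01 [hm [h0 h1]]].
apply: AggI => [x cx|x y cx cy xy||]; first by apply: Med01; [|exact: g01|exact: h01].
- by apply: Med_mono; [exact: gm|exact: hm].
- by rewrite g0 h0 Med_xx.
- by rewrite g1E h1 Med_xx.
Qed.

Lemma Agg_sup (I : Type) (g : I -> ('I_n -> R) -> R) :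
  inhabited I -> (forall i, Agg (g i)) -> Agg (fun x => sup (range (fun i => g i x))).
Proof.
move=> [i0] hg; have g01 x i : in_cube x -> 0 <= g i x <= 1 by case: (hg i) => + _; apply.
have g1 x i : in_cube x -> g i x <= 1 by move=> /(g01 x i) /andP[].
apply: AggI => [x cx|x y cx cy xy||].
- apply/andP; split; last by apply: sup_range_le => // i; exact: g1.
  by apply: le_trans (le_sup_range i0 (g1 x ^~ cx)); case/andP: (g01 x i0 cx).
- apply: sup_range_le => // i; apply: le_trans (le_sup_range i (g1 y ^~ cy)).
  by case: (hg i) => _ [+ _]; apply.
- by rewrite (@range_cst _ _ _ 0) ?sup1 // => i; case: (hg i) => _ [_ []].
- by rewrite (@range_cst _ _ _ 1) ?sup1 // => i; case: (hg i) => _ [_ [_]].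
Qed.

Lemma Agg_inf (I : Type) (g : I -> ('I_n -> R) -> R) :
  inhabited I -> (forall i, Agg (g i)) -> Agg (fun x => inf (range (fun i => g i x))).
Proof.
move=> [i0] hg; have g01 x i : in_cube x -> 0 <= g i x <= 1 by case: (hg i) => + _; apply.
have g0 x i : in_cube x -> 0 <= g i x by move=> /(g01 x i) /andP[].
apply: AggI => [x cx|x y cx cy xy||].
- apply/andP; split; first by apply: le_inf_range => // i; exact: g0.
  by apply: le_trans (inf_range_le i0 (g0 x ^~ cx)) _; case/andP: (g01 x i0 cx).
- apply: le_inf_range => // i; apply: le_trans (inf_range_le i (g0 x ^~ cx)) _.
  by case: (hg i) => _ [+ _]; apply.
- by rewrite (@range_cst _ _ _ 0) ?inf1 // => i; case: (hg i) => _ [_ []].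
- by rewrite (@range_cst _ _ _ 1) ?inf1 // => i; case: (hg i) => _ [_ [_]].
Qed.

Lemma Agg_ext g h : Agg g -> (forall x, in_cube x -> h x = g x) -> Agg h.
Proof.
move=> [g01 [gm [g0 g1]]] hg.
have [c0 c1] : in_cube (fun _ : 'I_n => 0 : R) /\ in_cube (fun _ : 'I_n => 1 : R).
  by split=> i; rewrite /in01 lexx ler01.
apply: AggI => [x cx|x y cx cy xy||]; rewrite ?hg //; [exact: g01|exact: gm].
Qed.

End Soundness.

Lemma C_Agg (R : realType) n (f : ('I_n -> R) -> R) : C f -> Agg f.
Proof.
elim=> {n f}.
- by move=> n i; exact: Agg_proj.
- by move=> n g q /andP[_ q1] _; apply: Agg_chi; rewrite ler_rat1.
- by move=> n g1 g2 q /in01_ratr q01 _ hg1 _ hg2; exact: Agg_Med.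
- by move=> n I g hI _ _; exact: Agg_sup.
- by move=> n I g hI _ _; exact: Agg_inf.
- by move=> n g h _ hg; exact: Agg_ext.
Qed.

Lemma Agg_nullary (R : realType) (f : ('I_0 -> R) -> R) : ~ Agg f.
Proof.
case=> _ [_ [f0 f1]]; have cst01 : (fun _ : 'I_0 => 0 : R) = (fun _ => 1).
  by apply: funext => -[].
by move/eqP: f1; rewrite -cst01 f0 eq_sym oner_eq0.
Qed.

Section SupClosure.
Variables (R : realType) (n : nat).

Definition sup_closed (I : Type) : Prop :=
  forall g : I -> ('I_n -> R) -> R,
    (forall i, C (g i)) -> C (fun x => sup (range (fun i => g i x))).

Lemma sup_closed_card (I : Type) :
  inhabited I -> ([set: I] #<= [set: R])%card -> sup_closed I.
Proof. by move=> I0 Ic g; exact: C_sup. Qed.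

Lemma sup_closed_surj (I J : Type) (s : I -> J) :
  (forall j, exists i, s i = j) -> sup_closed I -> sup_closed J.
Proof.
move=> s_surj hI g hg; apply: (C_ext (hI (g \o s) (fun i => hg (s i)))) => x _.
congr (sup _); apply/seteqP; split=> [_ [j _ <-]|_ [i _ <-]]; last by exists (s i).
by have [i <-] := s_surj j; exists i.
Qed.

Lemma sup_closed_prod (I J : Type) : inhabited I -> inhabited J ->
  sup_closed I -> sup_closed J -> sup_closed (I * J).
Proof.
move=> I0 J0 hI hJ g hg.
pose inner i x := sup (range (fun j => g (i, j) x)).
apply: (C_ext (hI inner (fun i => hJ _ (fun j => hg (i, j))))) => x cx.
apply: (sup_range_pair (b := 1)) => // p.
by case: (C_Agg (hg p)) => /(_ x cx) /andP[].
Qed.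

Lemma sup_closed_cube k : sup_closed ('I_k -> R).
Proof.
have sup_closed_R : sup_closed R.
  by apply: sup_closed_card; [exact: inhabits 0|exact: card_lexx].
elim: k => [|k IHk].
  apply: (@sup_closed_surj _ _ (fun r (_ : 'I_0) => r)) sup_closed_R => b.
  by exists 0; apply: funext => -[].
pose cons (p : R * ('I_k -> R)) (i : 'I_k.+1) :=
  if unlift ord0 i is Some j then p.2 j else p.1.
apply: (@sup_closed_surj _ _ cons).
  move=> b; exists (b ord0, b \o lift ord0); apply: funext => i.
  by rewrite /cons; case: unliftP => [j|] ->.
by apply: sup_closed_prod => //; [exact: inhabits 0|exact: inhabits (fun=> 0)].
Qed.

Lemma sup_closed_rat : sup_closed rat.
Proof. by apply: sup_closed_card; [exact: inhabits 0%R|exact: countable_card_le]. Qed.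

End SupClosure.

Section Indicators.
Variables (R : realType) (n : nat).
Implicit Types (a x : 'I_n -> R) (c : R).

Definition coord_ge_ind c (i : 'I_n) x : R :=
  inf (range (fun q : {q : rat | (0 <= q) && (ratr q < c)} => chi (ratr (val q)) (x i))).

Lemma coord_ge_indE c i x : 0 < c -> in01 (x i) ->
  coord_ge_ind c i x = if c <= x i then 1 else 0.
Proof.
move=> c0 /andP[xi0 _]; have [cx|xc] := leP c (x i).
  have q0 : (0 <= 0 :> rat) && (ratr 0 < c) by rewrite lexx rmorph0.
  rewrite /coord_ge_ind (@range_cst _ _ _ 1) ?inf1 //; first exact: inhabits (exist _ 0 q0).
  move=> [q /= /andP[_ qc]]; apply: chi_ge; first exact: ltW (lt_le_trans qc cx).
  exact: lt_le_trans c0 cx.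
have [q] := rat_in_itvoo xc; rewrite in_itv /= => /andP[xq qc].
have q0 : (0 <= q) && (ratr q < c) by rewrite qc andbT -(ler0q R) (le_trans xi0) ?ltW.
rewrite /coord_ge_ind (inf_range_min (j := exist _ q q0)) /= ?chi_lt // => p.
by case/andP: (chi01 (ratr (val p)) (x i)).
Qed.

Lemma C_coord_ge_ind c i : 0 < c <= 1 -> C (coord_ge_ind c i).
Proof.
case/andP=> c0 c1; apply: C_inf.
- by apply: inhabits (exist _ 0%R _); rewrite lexx rmorph0.
- exact: countable_card_le.
- move=> [q /= /andP[q0 qc]]; apply: (C_chi _ (C_proj R i)).
  by rewrite /rat01 q0 -(ler_rat1 R) (le_trans (ltW qc)).
Qed.

(* Coordinates with a i = 0 constrain nothing and are skipped: the step at c = 0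
   is not in C, since every member of C vanishes at the origin. *)
Definition upset_ind a x : R :=
  inf (range (fun i : {i : 'I_n | 0 < a i} => coord_ge_ind (a (val i)) (val i) x)).

Lemma upset_indE a x : (exists j, 0 < a j) -> in_cube x ->
  upset_ind a x = if [forall i, a i <= x i] then 1 else 0.
Proof.
move=> [j aj] cx; case: (boolP [forall i, _]) => [/forallP ax|/forallPn [i]].
  rewrite /upset_ind (@range_cst _ _ _ 1) ?inf1 //; first exact: inhabits (exist _ j aj).
  by move=> [k /= ak]; rewrite coord_ge_indE ?ax.
rewrite -ltNge => xa.
have ai : 0 < a i by case/andP: (cx i) => xi0 _; exact: le_lt_trans xa.
have ind_i : coord_ge_ind (a i) i x = 0 by rewrite coord_ge_indE // leNgt xa.
rewrite /upset_ind (inf_range_min (j := exist _ i ai)) //= ind_i => -[k /= ak].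
by rewrite coord_ge_indE //; case: ifP; rewrite ?ler01.
Qed.

Lemma C_upset_ind a : in_cube a -> (exists j, 0 < a j) -> C (upset_ind a).
Proof.
move=> ca [j aj]; apply: C_inf.
- exact: inhabits (exist _ j aj).
- exact: countable_card_le.
- by move=> [i /= ai]; apply: C_coord_ge_ind; case/andP: (ca i) => _ ->; rewrite ai.
Qed.

End Indicators.

Section Completeness.
Variables (R : realType) (m : nat) (f : ('I_m.+1 -> R) -> R).
Hypothesis f_Agg : Agg f.
Local Notation N := m.+1.
Implicit Types (a x : 'I_N -> R).

Definition top_ind x : R := upset_ind (fun _ => 1) x.

Lemma C_top_ind : C top_ind.
Proof.
by apply: C_upset_ind => [i|]; [rewrite /in01 ler01 lexx|exists ord0; rewrite ltr01].
Qed.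

Lemma top_indE x : in_cube x -> top_ind x = if [forall i, 1 <= x i] then 1 else 0.
Proof. by move=> cx; rewrite /top_ind upset_indE //; exists ord0; rewrite ltr01. Qed.

Lemma Agg_top x : in_cube x -> [forall i, 1 <= x i] -> f x = 1.
Proof.
have [_ [_ [_ f1]]] := f_Agg; move=> cx /forallP x1; rewrite -f1; congr f.
by apply: funext => i; apply/le_anti; rewrite x1 andbT; case/andP: (cx i).
Qed.

Lemma Agg_pos_coord x : in_cube x -> 0 < f x -> exists j, 0 < x j.
Proof.
have [_ [fm [f0 _]]] := f_Agg; move=> cx; apply: contraPP => /forallNP x0.
apply/negP; rewrite -leNgt -f0; apply: fm => // i; first by rewrite /in01 lexx ler01.
by rewrite leNgt; apply/negP/x0.
Qed.

Definition admissible a (q : rat) : Prop :=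
  [/\ in_cube a, exists j, 0 < a j, rat01 q & ratr q <= f a].

(* top_ind is the least aggregation function, a harmless value when (a, q) is
   not admissible. *)
Definition lower_step a (q : rat) : ('I_N -> R) -> R :=
  if `[< admissible a q >] then fun x => Med (ratr q) (upset_ind a x) (top_ind x)
  else top_ind.

Lemma C_lower_step a (q : rat) : C (lower_step a q).
Proof.
rewrite /lower_step; case: asboolP => [[ca a_pos q01 _]|_]; last exact: C_top_ind.
exact: C_med q01 (C_upset_ind ca a_pos) C_top_ind.
Qed.

Lemma lower_step_le a (q : rat) x : in_cube x -> lower_step a q x <= f x.
Proof.
move=> cx; have [f01 [fm _]] := f_Agg.
have f0x : 0 <= f x by case/andP: (f01 x cx).
case: (boolP [forall i, 1 <= x i]) => [top|ntop].
  rewrite Agg_top //; have [step01 _] := C_Agg (C_lower_step a q).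
  by case/andP: (step01 x cx).
have top0 : top_ind x = 0 by rewrite top_indE // (negbTE ntop).
rewrite /lower_step; case: asboolP => [[ca a_pos /andP[q0 q1] qfa]|_].
  rewrite top0 upset_indE //; case: (boolP [forall i, _]) => [/forallP ax|_].
    rewrite Med_mid ?ler0q ?q0 ?ler_rat1 //; exact: le_trans qfa (fm a x ca cx ax).
  by rewrite Med_xx.
by rewrite top0.
Qed.

Lemma lower_step_diag x (q : rat) : in_cube x -> 0 <= q -> ratr q < f x ->
  ratr q <= lower_step x q x.
Proof.
move=> cx q0 qf; have [f01 _] := f_Agg.
have q1 : ratr q <= 1 :> R by apply: le_trans (ltW qf) _; case/andP: (f01 x cx).
have x_pos : exists j, 0 < x j.
  by apply: Agg_pos_coord; rewrite // (le_lt_trans _ qf) ?ler0q.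
have adm : admissible x q by split=> //; [rewrite /rat01 q0 -(ler_rat1 R)|exact: ltW].
rewrite /lower_step (asboolT adm) le_Med // upset_indE //.
by have -> : [forall i, x i <= x i] by apply/forallP => i.
Qed.

Lemma Agg_C : C f.
Proof.
pose F x := sup (range (fun p : ('I_N -> R) * rat => lower_step p.1 p.2 x)).
have CF : C F.
  apply: (sup_closed_prod (inhabits (fun=> 0)) (inhabits 0%R)
            (@sup_closed_cube R N N) (@sup_closed_rat R N)) => -[a q].
  exact: C_lower_step.
apply: (C_ext CF) => x cx.
have step01 p : in01 (lower_step p.1 p.2 x).
  by case: (C_Agg (C_lower_step p.1 p.2)) => + _; apply.
have step1 p : lower_step p.1 p.2 x <= 1 by case/andP: (step01 p).
apply/le_anti/andP; split.
  apply: le_rat_dense => [|q q0 qf].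
    apply: le_trans (le_sup_range (fun=> 0, 0%R) step1).
    by case/andP: (step01 (fun=> 0, 0%R)).
  exact: le_trans (lower_step_diag cx q0 qf) (le_sup_range (x, q) step1).
apply: sup_range_le => [|p]; first exact: inhabits (fun=> 0, 0%R).
exact: lower_step_le.
Qed.

End Completeness.

Theorem corollary1 (R : realType) (n : nat) (f : ('I_n -> R) -> R) :
  C f <-> Agg f.
Proof.
split; first exact: C_Agg.
by case: n f => [f /Agg_nullary|m f]; last exact: Agg_C.
Qed.
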